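(* Let $\mathbb{F}$ be a field, $n,d$ positive integers, and $P_n=\mathbb{F}[x_1,\dots,x_n]$. For $k\ge 3$ let $D_k$ be the set of monomials of degree $k$ in $x_1,\dots,x_{k-1}$ not divisible by $x_{k-1}^2$ (if $n<k-1$, $D_k$ is the set of all monomials of degree $k$ in $x_1,\dots,x_n$); let $K_n\subseteq P_n$ be the ideal generated by $x_1^3,\dots,x_n^3$ and $\bigcup_{k=3}^{n+1}D_k$, and let $K_{n,d}\subseteq P_n$ be the ideal generated by those of these generators of $K_n$ that have degree $\le d$. Let $\mu\in P_n$ be a monomial of degree $d-1$ which does not end in $x_{d-2}^2$, and assume $\mu\notin K_n$. Then there exists a monomial $M$ which is a multiple of $\mu$, has degree $2n-d+2$, and satisfies $M\notin K_{n,d}$.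
   Context: A monomial $m$ is said to end in $x_j^{e}$ if $m=x_1^{a_1}\cdots x_{j-1}^{a_{j-1}}x_j^{e}$, i.e. $m$ involves no variable $x_i$ with $i>j$ and the exponent of $x_j$ in $m$ is $e$. *)

From HB Require Import structures.
From mathcomp Require Import all_boot all_order all_algebra.
From mathcomp Require Import mpoly.
Set Implicit Arguments. Unset Strict Implicit. Unset Printing Implicit Defensive.
Import GRing.Theory.
Local Open Scope ring_scope.

(* Variables x_1, ..., x_n are indexed 0-based by 'I_n: x_(i+1) <-> i. *)

Definition ideal_gen (F : fieldType) (n : nat) (S : {mpoly F[n]} -> Prop)
    (p : {mpoly F[n]}) : Prop :=
  exists r : seq ({mpoly F[n]} * {mpoly F[n]}),
    (forall x, x \in r -> S x.2) /\ p = \sum_(x <- r) x.1 * x.2.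

Definition cube_mon (n : nat) (m : 'X_{1..n}) : Prop :=
  exists i : 'I_n, m = (U_(i) *+ 3)%MM.

Definition in_D (n k : nat) (m : 'X_{1..n}) : Prop :=
  if (k.-1 <= n)%N then
    [/\ mdeg m = k,
        (forall i : 'I_n, (k.-1 <= i)%N -> m i = 0%N) &
        (forall i : 'I_n, nat_of_ord i = k.-2 -> (m i < 2)%N)]
  else mdeg m = k.

Definition K_gen (n : nat) (m : 'X_{1..n}) : Prop :=
  cube_mon m \/ exists k : nat, [/\ (3 <= k)%N, (k <= n.+1)%N & in_D k m].

Definition K_ideal (F : fieldType) (n : nat) : {mpoly F[n]} -> Prop :=
  ideal_gen (fun p => exists m : 'X_{1..n}, K_gen m /\ p = 'X_[m]).

Definition Knd_ideal (F : fieldType) (n d : nat) : {mpoly F[n]} -> Prop :=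
  ideal_gen (fun p => exists m : 'X_{1..n},
    [/\ K_gen m, (mdeg m <= d)%N & p = 'X_[m]]).

(* m ends in x_j^e (j is 1-based): x_j is a variable (1 <= j <= n), no x_i
   with i > j occurs, and the exponent of x_j is e. *)
Definition ends_in (n : nat) (m : 'X_{1..n}) (j e : nat) : Prop :=
  [/\ (1 <= j)%N, (j <= n)%N,
      (forall i : 'I_n, (j <= i)%N -> m i = 0%N) &
      (forall i : 'I_n, nat_of_ord i = j.-1 -> m i = e)].

From HB Require Import structures.
From mathcomp Require Import all_boot all_order all_algebra.
From mathcomp Require Import mpoly.
From mathcomp Require Import zify.
From Stdlib Require Import Classical.
Set Implicit Arguments.
Unset Strict Implicit.
Unset Printing Implicit Defensive.
Import GRing.Theory.
Local Open Scope ring_scope.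

(* Since every generator is a monomial, a monomial lies in K_n (or K_{n,d})
   iff some generator divides it.  Writing s_q(m) for the degree of m in
   x_1, ..., x_q, no cube divides m iff all exponents are at most 2, and no
   element of D_(q+2) divides m iff s_q(m) + min(a, 1) <= q + 1, where a is
   the exponent of x_(q+1) in m.
   For mu these bounds, together with deg mu = d - 1 and mu not ending in
   x_(d-2)^2, give s_(d-2)(mu) <= d - 2.  Raising exponents of x_1, ...,
   x_(d-2) one at a time, always at the last variable of exponent < 2, keeps
   the bounds and brings s_(d-2) up to d - 2; giving x_(d-1), ..., x_n the
   exponent 2 then yields M of degree 2n - d + 2.  K_{n,d} only involves
   D_k for k <= d, i.e. the bounds for q <= d - 2, which M satisfies. *)

Lemma mcoeffMX_nlepm (F : fieldType) n (p : {mpoly F[n]}) (g m : 'X_{1..n}) :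
  ~~ (g <= m)%MM -> (p * 'X_[g])@_m = 0.
Proof.
apply: contraNeq; rewrite -mcoeff_msupp (perm_mem (msuppMX _ _)).
by case/mapP=> m' _ ->; exact: lem_addr.
Qed.

Lemma ideal_gen_monomial_divisor (F : fieldType) n
    (S : {mpoly F[n]} -> Prop) (P : 'X_{1..n} -> Prop) (m : 'X_{1..n}) :
    (forall p, S p -> exists2 g, P g & p = 'X_[g]) ->
  ideal_gen S 'X_[m] -> exists2 g, P g & (g <= m)%MM.
Proof.
move=> SP [r [Sr Em]]; apply: NNPP => no_div.
have : ('X_[m] : {mpoly F[n]})@_m = 0.
  rewrite Em raddf_sum /= big1_seq // => x /andP[_ /Sr/SP[g Pg ->]].
  by apply: mcoeffMX_nlepm; apply/negP => gm; apply: no_div; exists g.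
by rewrite mcoeffX eqxx => /eqP; rewrite oner_eq0.
Qed.

Lemma ideal_gen_lepm (F : fieldType) n (S : {mpoly F[n]} -> Prop)
    (g m : 'X_{1..n}) :
  S 'X_[g] -> (g <= m)%MM -> ideal_gen S 'X_[m].
Proof.
move=> Sg gm; exists [:: ('X_[m - g], 'X_[g])]; split.
  by move=> x; rewrite inE => /eqP ->.
by rewrite big_seq1 /= -mpolyXD submK.
Qed.

Section MonomialBounds.

Local Open Scope nat_scope.

Variable n : nat.
Implicit Types m g : 'X_{1..n}.

Definition prefix_deg m (q : nat) : nat := \sum_(i < n | i < q) m i.

Lemma prefix_deg0 m : prefix_deg m 0 = 0.
Proof. by rewrite /prefix_deg big_pred0. Qed.

Lemma prefix_degS m (i : 'I_n) : prefix_deg m i.+1 = prefix_deg m i + m i.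
Proof.
rewrite /prefix_deg (bigD1 i) //= addnC; congr addn; apply: eq_bigl => j.
by rewrite ltnS -val_eqE /= andbC -ltn_neqAle.
Qed.

Lemma prefix_degD m1 m2 q :
  prefix_deg (m1 + m2)%MM q = prefix_deg m1 q + prefix_deg m2 q.
Proof. by rewrite /prefix_deg -big_split; apply: eq_bigr => i _; rewrite mnmDE. Qed.

Lemma prefix_degU (i : 'I_n) q : prefix_deg U_(i)%MM q = (i < q).
Proof.
rewrite /prefix_deg big_mkcond (bigD1 i) //= mnm1E eqxx big1 ?addn0 => [|j ji].
  by case: (i < q).
by rewrite mnm1E eq_sym (negbTE ji); case: (j < q).
Qed.

Lemma prefix_deg_lepm g m q : (g <= m)%MM -> prefix_deg g q <= prefix_deg m q.
Proof. by move/mnm_lepP=> gm; apply: leq_sum => i _. Qed.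

Lemma mdeg_prefixE m q : mdeg m = prefix_deg m q + \sum_(i < n | q <= i) m i.
Proof.
rewrite mdegE (bigID (fun i : 'I_n => i < q)) /=; congr addn.
by apply: eq_bigl => i; rewrite -leqNgt.
Qed.

Lemma prefix_deg_eq_mdeg m q :
  prefix_deg m q = mdeg m <-> forall i : 'I_n, q <= i -> m i = 0.
Proof.
rewrite (mdeg_prefixE m q); split => [E i qi | m0].
  have /eqP := E; rewrite -{1}[prefix_deg m q]addn0 eqn_add2l eq_sym sum_nat_eq0.
  by move/forall_inP/(_ i qi)/eqP.
by rewrite big1 ?addn0.
Qed.

Lemma exists_lepm_mdeg m k : k <= mdeg m -> exists2 g, (g <= m)%MM & mdeg g = k.
Proof.
elim: k => [|k IH] km.
  by exists 0%MM; [apply/mnm_lepP => i; rewrite mnm0E | rewrite mdeg0].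
have [g gm gk] := IH (ltnW km).
have [i gmi] : exists i, g i < m i.
  apply/existsP; apply: contraTT km => /existsPn mg.
  have -> : m = g.
    by apply/mnmP => i; apply/eqP; rewrite eqn_leq leqNgt mg (mnm_lepP gm).
  by rewrite gk ltnn.
exists (g + U_(i))%MM; last by rewrite mdegD mdeg1 gk addn1.
apply/mnm_lepP => j; rewrite mnmDE mnm1E.
by case: eqP => [<-|_]; rewrite ?addn1 ?addn0 ?(mnm_lepP gm).
Qed.

Definition cube_free m := forall i, m i <= 2.

Lemma cube_freeP m : (forall g, cube_mon g -> ~~ (g <= m)%MM) <-> cube_free m.
Proof.
split=> [no_cube i | m2 g [i ->]].
  rewrite leqNgt; apply/negP => mi; have /negP := no_cube _ (ex_intro _ i erefl); apply.
  by apply/mnm_lepP => j; rewrite mulmnE mnm1E; case: eqP => [<-|_]; lia.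
by apply/negP => /mnm_lepP/(_ i); rewrite mulmnE mnm1E eqxx; have := m2 i; lia.
Qed.

(* The index q is 0-based: [m q] is the exponent of x_(q+1), and
   [D_free m q] is about the generators in D_(q+2). *)
Definition D_free m (q : 'I_n) : bool := prefix_deg m q + minn (m q) 1 <= q.+1.

Lemma exists_in_D_lepm m (q : 'I_n) :
  ~~ D_free m q -> exists2 g, in_D q.+2 g & (g <= m)%MM.
Proof.
rewrite /D_free -ltnNge => not_free.
pose b := minn (m q) 1.
pose mq := [multinom (if i < q then m i else 0) | i < n].
have mq_deg : mdeg mq = prefix_deg m q.
  by rewrite mdegE /prefix_deg [RHS]big_mkcond; apply: eq_bigr => i _; rewrite mnmE.
have [g' g'mq g'deg] := exists_lepm_mdeg (k := q.+2 - b) (m := mq) ltac:(lia).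
have g'0 (i : 'I_n) : q <= i -> g' i = 0.
  by move=> qi; have := mnm_lepP g'mq i; rewrite mnmE ltnNge qi /=; lia.
exists (g' + U_(q) *+ b)%MM.
  rewrite /in_D ifT ?ltn_ord //; split.
  - by rewrite mdegD mdegMn mdeg1 g'deg mul1n; lia.
  - move=> i qi; rewrite mnmDE mulmnE mnm1E g'0 ?(leq_trans (leqnSn q) qi) //.
    by case: eqP => [qiE|]; [rewrite -qiE ltnn in qi | rewrite mul0n].
  - move=> i /= iq; have -> : i = q by apply: val_inj.
    by rewrite mnmDE mulmnE mnm1E eqxx g'0 // mul1n; lia.
apply/mnm_lepP => i; rewrite mnmDE mulmnE mnm1E.
case: (eqVneq q i) => [<-|qi]; first by rewrite g'0 //= mul1n geq_minl.
by have := mnm_lepP g'mq i; rewrite mnmE mul0n addn0; case: ifP => // _; lia.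
Qed.

Lemma D_freeP m (q : 'I_n) :
  (forall g, in_D q.+2 g -> ~~ (g <= m)%MM) <-> D_free m q.
Proof.
split=> [no_div | free g].
  apply: contraT => /exists_in_D_lepm[g gD gm].
  by have := no_div g gD; rewrite gm.
rewrite /in_D ifT ?ltn_ord // => -[gdeg gsupp gq]; apply/negP => gm.
have gq1 : g q <= minn (m q) 1 by rewrite leq_min (mnm_lepP gm) -ltnS gq.
have /prefix_deg_eq_mdeg : forall i : 'I_n, q.+1 <= i -> g i = 0 by [].
rewrite prefix_degS gdeg => gdeg'.
by move: free; rewrite /D_free; have := prefix_deg_lepm q gm; lia.
Qed.

Lemma Knd_freeP m d :
  (forall g, K_gen g -> mdeg g <= d -> ~~ (g <= m)%MM) <->
  (3 <= d -> cube_free m) /\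
  (forall q : 'I_n, 0 < q -> q.+2 <= d -> D_free m q).
Proof.
split=> [no_div | [m2 free] g [cube|[k [k3 kn gD]]] gd].
- split=> [d3 | q q0 qd].
    apply/cube_freeP => g cube; apply: no_div; first by left.
    by case: cube => i ->; rewrite mdegMn mdeg1.
  have qn := ltn_ord q.
  apply/D_freeP => g gD; apply: no_div; first by right; exists q.+2; split=> //; lia.
  by move: gD; rewrite /in_D ifT // => -[-> _ _].
- have cube3 : mdeg g = 3 by case: cube => i ->; rewrite mdegMn mdeg1.
  by apply: (proj2 (cube_freeP m)) cube; apply: m2; lia.
- have kq : k - 2 < n by lia.
  have kE : (Ordinal kq).+2 = k by rewrite /=; lia.
  have gk : mdeg g = k by move: gD; rewrite /in_D ifT; [case | lia].
  have free_k := free (Ordinal kq) ltac:(rewrite /=; lia) ltac:(by rewrite kE -gk).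
  by apply: (proj2 (D_freeP m _) free_k); rewrite kE.
Qed.

Definition D_free_below m j := forall r : 'I_n, 0 < r < j -> D_free m r.

Lemma D_freeDU m (i r : 'I_n) :
  D_free (m + U_(i))%MM r = (prefix_deg m r + (i < r) + minn (m r + (i == r)) 1 <= r.+1).
Proof. by rewrite /D_free prefix_degD prefix_degU mnmDE mnm1E. Qed.

(* Incrementing the last exponent below 2 among x_1, ..., x_j keeps all the
   bounds, because every later exponent in that range is already 2. *)
Lemma D_free_below_incr m j :
    j <= n -> cube_free m -> D_free_below m j -> prefix_deg m j < j ->
  exists i : 'I_n, [/\ i < j, m i < 2 & D_free_below (m + U_(i))%MM j].
Proof.
elim: j => [|j IH] jn m2 free; first by rewrite ltn0.
pose q := Ordinal jn; have qj : nat_of_ord q = j by [].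
rewrite (prefix_degS m q) qj => mj.
have below_or_q (r : 'I_n) : 0 < r < j.+1 -> r < j \/ r = q.
  case/andP=> _; rewrite ltnS leq_eqVlt => /orP[/eqP rq|]; last by left.
  by right; apply: val_inj.
have [mq|mq] := ltnP (m q) 2.
  exists q; split => // r /[dup] r_range /below_or_q [rj|->].
    have /negbTE qr : q != r by rewrite -val_eqE /= neq_ltn rj orbT.
    have /negbTE q_r : ~~ (q < r) by rewrite -leqNgt; exact: ltnW.
    by rewrite D_freeDU qr q_r !addn0; exact: free.
  by rewrite D_freeDU ltnn eqxx /=; lia.
have [i [ij mi free_i]] := IH (ltnW jn) m2 (fun r rj => free r ltac:(lia)) ltac:(lia).
exists i; split => [||r /[dup] r_range /below_or_q [rj|->]]; first lia; first done.
  by apply: free_i; lia.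
have /negbTE iq : i != q by rewrite -val_eqE /= neq_ltn ij.
by rewrite D_freeDU iq [_ < q]ij addn0 qj /=; have := m2 q; lia.
Qed.

Lemma D_free_below_fill m j :
    j <= n -> cube_free m -> D_free_below m j -> prefix_deg m j <= j ->
  exists2 M, (m <= M)%MM & [/\ cube_free M, D_free_below M j & prefix_deg M j = j].
Proof.
move=> jn; move Ek: (j - prefix_deg m j) => k.
elim: k m Ek => [|k IH] m Ek m2 free mj.
  by exists m; [exact: lepm_refl | split => //; lia].
have [i [ij mi free_i]] := D_free_below_incr jn m2 free ltac:(lia).
have mj_i : prefix_deg (m + U_(i))%MM j = (prefix_deg m j).+1.
  by rewrite prefix_degD prefix_degU ij addn1.
have m2_i : cube_free (m + U_(i))%MM.
  by move=> l; rewrite mnmDE mnm1E; case: eqP => [<-|_]; [lia | rewrite addn0].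
have [M mM MP] :=
  IH (m + U_(i))%MM ltac:(rewrite mj_i; lia) m2_i free_i ltac:(rewrite mj_i; lia).
by exists M => //; apply: lepm_trans mM; exact: lem_addr.
Qed.

Lemma prefix_degS_le m (s : 'I_n) :
  cube_free m -> (0 < s -> D_free m s) -> prefix_deg m s.+1 <= s.+1 + (m s == 2).
Proof.
move=> m2 free; rewrite prefix_degS; have := m2 s.
have [s0|s_pos] := posnP s; first by rewrite s0 prefix_deg0; case: eqP; lia.
by have := free s_pos; rewrite /D_free; case: eqP; lia.
Qed.

Lemma prefix_deg_le_not_ends_in m t :
    cube_free m -> (forall q : 'I_n, 0 < q -> D_free m q) ->
    mdeg m = t.+1 -> 0 < t -> ~ ends_in m t 2 ->
  t <= n /\ prefix_deg m t <= t.
Proof.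
move=> m2 free mdeg_t t0 not_ends.
have le (s : 'I_n) := prefix_degS_le m2 (free s).
have tn : t <= n.
  have n0 : 0 < n.
    rewrite lt0n; apply/eqP => n0; move: mdeg_t; rewrite mdegE big1 // => i.
    by have := ltn_ord i; rewrite {2}n0.
  rewrite leqNgt; apply/negP => nt; have n1 : n.-1 < n by lia.
  have := le (Ordinal n1); rewrite /= prednK; last lia.
  have -> : prefix_deg m n = mdeg m.
    by apply/prefix_deg_eq_mdeg => i; rewrite leqNgt ltn_ord.
  by rewrite mdeg_t; case: eqP; lia.
have t1 : t.-1 < n by lia.
have := le (Ordinal t1); rewrite /= prednK //.
case: eqP => [mt2|_]; last by rewrite addn0.
move=> mt; split => //; rewrite leqNgt; apply/negP => tm.
apply: not_ends; split => // [i ti|i it].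
  by apply: (prefix_deg_eq_mdeg m t).1 => //; lia.
by have -> : i = Ordinal t1 by apply: val_inj.
Qed.

Lemma exists_D_free_multiple mu t :
    t <= n -> cube_free mu -> D_free_below mu t -> prefix_deg mu t <= t ->
  exists2 M, (mu <= M)%MM &
    [/\ cube_free M, D_free_below M t.+1 & mdeg M = t + (n - t) * 2].
Proof.
move=> tn m2 free mut.
pose m1 := [multinom (if i < t then mu i else 2) | i < n].
have m1E (i : 'I_n) : i < t -> m1 i = mu i by move=> it; rewrite mnmE it.
have m1_prefix r : r <= t -> prefix_deg m1 r = prefix_deg mu r.
  by move=> rt; apply: eq_bigr => i ir; apply: m1E; lia.
have m1_free : D_free_below m1 t.
  by move=> r rt; rewrite /D_free m1_prefix ?m1E; [apply: free | lia | lia].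
have m1_cube : cube_free m1 by move=> i; rewrite mnmE; case: ifP.
have [M m1M [M2 M_free Mt]] :=
  D_free_below_fill tn m1_cube m1_free ltac:(by rewrite m1_prefix).
have M_top (i : 'I_n) : t <= i -> M i = 2.
  by move=> ti; have := mnm_lepP m1M i; rewrite mnmE ltnNge ti /=; have := M2 i; lia.
exists M; first by apply: lepm_trans m1M; apply/mnm_lepP => i; rewrite mnmE; case: ifP.
split=> // [r /andP[r0]|].
  rewrite ltnS leq_eqVlt => /orP[/eqP rt|rt]; last by apply: M_free; rewrite r0.
  by rewrite /D_free M_top ?rt // Mt; lia.
rewrite (mdeg_prefixE M t) Mt -sum_nat_const_nat big_geq_mkord.
by congr addn; apply: eq_big => // i /M_top.
Qed.

End MonomialBounds.

Theorem mainTheorem12 (F : fieldType) (n d : nat)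
    (hn : (0 < n)%N) (hd : (0 < d)%N) (mu : 'X_{1..n})
    (hdeg : mdeg mu = d.-1)
    (hend : ~ ends_in mu (d - 2) 2)
    (hK : ~ @K_ideal F n 'X_[mu]) :
  exists M : 'X_{1..n},
    [/\ (mu <= M)%MM, mdeg M = (2 * n + 2 - d)%N & ~ @Knd_ideal F n d 'X_[M]].
Proof.
have mu_free g : K_gen g -> (mdeg g <= n.+2)%N -> ~~ (g <= mu)%MM.
  by move=> Kg _; apply/negP => gmu; apply/hK/(ideal_gen_lepm _ gmu); exists g.
have [/(_ hn) mu_cube mu_D] := (Knd_freeP mu n.+2).1 mu_free.
have Knd_free M : (forall g, K_gen g -> (mdeg g <= d)%N -> ~~ (g <= M)%MM) ->
    ~ @Knd_ideal F n d 'X_[M].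
  move=> M_free /(ideal_gen_monomial_divisor (P := fun g => K_gen g /\ (mdeg g <= d)%N)).
  by case=> [p [g [Kg gd ->]]|g [Kg gd]]; [exists g | apply/negP/M_free].
have [d2|d3] := leqP d 2.
  exists (mu + U_(Ordinal hn) *+ (2 * n + 2 - d - d.-1))%MM; split.
  - exact: lem_addr.
  - by rewrite mdegD mdegMn mdeg1 hdeg; lia.
  - by apply/Knd_free/Knd_freeP; split=> [|q q0]; lia.
have {}mu_D (q : 'I_n) : (0 < q)%N -> D_free mu q.
  by move=> q0; apply: mu_D q0 (ltnW (ltn_ord q)).
have [tn mu_t] := prefix_deg_le_not_ends_in (t := d - 2) mu_cube mu_D
  ltac:(rewrite hdeg; lia) ltac:(lia) hend.
have [M muM [M_cube M_D M_deg]] :=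
  exists_D_free_multiple tn mu_cube (fun r rt => mu_D r ltac:(lia)) mu_t.
exists M; split=> //; first by rewrite M_deg; lia.
by apply/Knd_free/Knd_freeP; split=> // q q0 qd; apply: M_D; lia.
Qed.
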